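(* Let $p\in(1,\infty)$, $M_0>0$, $L>0$, and let $0\le u\in C(\overline{B_1(0)}\times[0,\frac{1}{4n+M_0}])$ satisfy $|\mathcal{L}u-\partial_tu|\le M_0$ (in the viscosity sense) in $\{u>1\}$ and $|\nabla u|\le L$. Then there exists a constant $C=C(L)$ such that $$|u(0,t)-u(0,0)|\le C\quad\text{for }0\le t\le\frac{1}{4n+M_0}.$$
   Context: $\mathcal{L}v=\frac1p\Delta v+\frac{p-2}{p}\langle D^2v\frac{\nabla v}{|\nabla v|},\frac{\nabla v}{|\nabla v|}\rangle$ (normalized $p$-Laplacian); viscosity inequalities are understood via $C^2$ test functions, using $\mathcal{L}\phi-\phi_t$ where $\nabla\phi\ne0$ and $\Delta\phi+(p-2)\lambda_{\max}(D^2\phi)-\phi_t$ (if $p\ge2$), resp. $\Delta\phi+(p-2)\lambda_{\min}(D^2\phi)-\phi_t$ (if $1<p<2$), where $\nabla\phi=0$. *)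

From mathcomp Require Import all_boot all_order all_algebra.
From mathcomp Require Import all_classical all_reals all_analysis.
Import Order.TTheory GRing.Theory Num.Theory.
Import numFieldNormedType.Exports.
Set Implicit Arguments. Unset Strict Implicit. Unset Printing Implicit Defensive.
Local Open Scope ring_scope.

Definition ST (R : realType) (n : nat) := ('rV[R]_n * R^o)%type.

Definition enorm (R : realType) (n : nat) (v : 'rV[R]_n) : R :=
  Num.sqrt (\sum_(i < n) v 0 i ^+ 2).

Definition sdir {R : realType} {n : nat} (i : 'I_n) : ST R n :=
  (delta_mx 0 i, 0).
Definition tdir (R : realType) (n : nat) : ST R n := (0, 1).

Definition C2 (R : realType) (n : nat) (phi : ST R n -> R^o) : Prop :=
  continuous phi /\
  (forall (z v : ST R n), derivable phi z v) /\
  (forall (v : ST R n), continuous ('D_v phi)) /\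
  (forall (z v w : ST R n), derivable ('D_v phi) z w) /\
  (forall (v w : ST R n), continuous ('D_w ('D_v phi))).

Definition grad (R : realType) (n : nat) (phi : ST R n -> R^o) (z : ST R n)
  : 'rV[R]_n := \row_i ('D_(sdir i) phi z : R).
Definition hess (R : realType) (n : nat) (phi : ST R n -> R^o) (z : ST R n)
  : 'M[R]_n := \matrix_(i, j) ('D_(sdir j) ('D_(sdir i) phi) z : R).
Definition dt (R : realType) (n : nat) (phi : ST R n -> R^o) (z : ST R n) : R :=
  'D_(tdir R n) phi z.
Definition lap (R : realType) (n : nat) (phi : ST R n -> R^o) (z : ST R n) : R :=
  \tr (hess phi z).

(* normalized p-Laplacian of phi at z (meaningful where grad phi z != 0):
   (1/p) Delta phi + (p-2)/p < D^2 phi  nu, nu >,  nu = grad/|grad| *)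
Definition npLap (R : realType) (n : nat) (p : R) (phi : ST R n -> R^o)
  (z : ST R n) : R :=
  let g := grad phi z in
  p^-1 * lap phi z +
  (p - 2) / p * ((g *m hess phi z *m g^T) 0 0 / (enorm g ^+ 2)).

Definition is_lambda_max (R : realType) (n : nat) (A : 'M[R]_n) (l : R) : Prop :=
  eigenvalue A l /\ forall l', eigenvalue A l' -> l' <= l.
Definition is_lambda_min (R : realType) (n : nat) (A : 'M[R]_n) (l : R) : Prop :=
  eigenvalue A l /\ forall l', eigenvalue A l' -> l <= l'.

Definition local_max_at (R : realType) (n : nat) (f : ST R n -> R) (z0 : ST R n)
  : Prop :=
  exists r : R, 0 < r /\ forall z : ST R n,
    enorm (z.1 - z0.1) < r -> `|z.2 - z0.2| < r -> f z <= f z0.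
Definition local_min_at (R : realType) (n : nat) (f : ST R n -> R) (z0 : ST R n)
  : Prop :=
  exists r : R, 0 < r /\ forall z : ST R n,
    enorm (z.1 - z0.1) < r -> `|z.2 - z0.2| < r -> f z0 <= f z.

Definition visc_sub (R : realType) (n : nat) (p M0 : R) (u : ST R n -> R)
  (D : set (ST R n)) : Prop :=
  forall (z0 : ST R n) (phi : ST R n -> R^o), D z0 -> C2 phi ->
    local_max_at (fun z => u z - phi z) z0 ->
    (grad phi z0 != 0 -> npLap p phi z0 - dt phi z0 >= - M0) /\
    (grad phi z0 = 0 -> forall l : R,
       (if 2 <= p then is_lambda_max (hess phi z0) l
        else is_lambda_min (hess phi z0) l) ->
       p^-1 * (lap phi z0 + (p - 2) * l) - dt phi z0 >= - M0).

Definition visc_super (R : realType) (n : nat) (p M0 : R) (u : ST R n -> R)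
  (D : set (ST R n)) : Prop :=
  forall (z0 : ST R n) (phi : ST R n -> R^o), D z0 -> C2 phi ->
    local_min_at (fun z => u z - phi z) z0 ->
    (grad phi z0 != 0 -> npLap p phi z0 - dt phi z0 <= M0) /\
    (grad phi z0 = 0 -> forall l : R,
       (if 2 <= p then is_lambda_min (hess phi z0) l
        else is_lambda_max (hess phi z0) l) ->
       p^-1 * (lap phi z0 + (p - 2) * l) - dt phi z0 <= M0).

Definition visc_bounded (R : realType) (n : nat) (p M0 : R) (u : ST R n -> R)
  (D : set (ST R n)) : Prop :=
  visc_sub p M0 u D /\ visc_super p M0 u D.

Definition cyl (R : realType) (n : nat) (T : R) : set (ST R n) :=
  [set z | enorm z.1 <= 1 /\ 0 <= z.2 <= T].
Definition cyl_int (R : realType) (n : nat) (T : R) : set (ST R n) :=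
  [set z | enorm z.1 < 1 /\ 0 < z.2 < T].

From mathcomp Require Import all_boot all_order all_algebra.
From mathcomp Require Import all_classical all_reals all_analysis.
From mathcomp Require Import lra ring.
Import Order.TTheory GRing.Theory Num.Theory.
Import numFieldNormedType.Exports.
Local Open Scope ring_scope.
Local Open Scope classical_set_scope.
Set Implicit Arguments. Unset Strict Implicit. Unset Printing Implicit Defensive.

(* Compare u with the barrier phi(x,t) = 2L|x|^2 + K t + d t^m, K = 4Ln + M0.
   Its Hessian is the scalar matrix 4L, so L phi - phi_t <= 4Ln - K < -M0 in
   both branches of the viscosity test: u - phi cannot have an interior local
   maximum where u > 1.  Given 0 <= s < t1 <= T, choose m and d with d t1^m
   larger than the oscillation of u and d s^m <= 1; then u - phi attains its
   maximum over B_1 x [0, t1] below t1, on the open ball, and either at t = 0,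
   where the Lipschitz bound gives u(x,0) - 2L|x|^2 <= u(0,0) + L/8, or where
   u <= 1.  Evaluating at (0, s) and using K s <= L + 1 bounds u(0, s) from
   above.  For the lower bound the argument is run on -u up to the first time
   u(0, .) drops far below u(0, 0); before that time u > 1 on the whole ball,
   so only the alternative t = 0 remains. *)

Lemma is_derive_quadratic (R : realType) (V : normedModType R) (f : V -> R^o)
    (a v : V) (c q : R) :
  (forall h : R, f (h *: v + a) = f a + h * c + h ^+ 2 * q) ->
  is_derive a v f (c : R^o).
Proof.
move=> fE.
have lim_c : (fun h : R => (c + h * q : R^o)) @ (0:R)^' --> (c : R^o).
  rewrite -[X in _ --> X]addr0 -[X in _ + X](mul0r q).
  apply: cvg_within_filter; apply: cvgD; first exact: cvg_cst.
  by apply: cvgM; [exact: cvg_id | exact: cvg_cst].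
have quotient_lim :
    (fun h : R => h^-1 *: ((f \o shift a) (h *: v) - f a)) @ (0:R)^' --> (c : R^o).
  apply: cvg_trans lim_c; apply: near_eq_cvg; near=> h.
  have h0 : h != 0 by near: h; exact: nbhs_dnbhs_neq.
  rewrite /= fE.
  have -> : f a + h * c + h ^+ 2 * q - f a = h * (c + h * q) by ring.
  by rewrite /GRing.scale /= mulrA mulVf // mul1r.
have fv : derivable f a v by apply/cvg_ex; exists (c : R^o).
by constructor => //; apply: cvg_lim.
Unshelve. all: by end_near.
Qed.

Section SpaceTimePolynomials.
Variables (R : realType) (n : nat).
Implicit Types (al be : 'I_n -> R) (c e d : R) (m : nat) (a v z : ST R n).

(* This family is closed under every directional derivative 'D_v, which is
   all that is needed to see that its members are C^2. *)
Definition st_quad al be c e z : R^o :=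
  c + \sum_(i < n) (al i * z.1 ord0 i ^+ 2 + be i * z.1 ord0 i) + e * z.2.

Definition st_poly al be c e d m z : R^o := st_quad al be c e z + d * z.2 ^+ m.

Lemma is_derive_st_quad al be c e a v :
  is_derive a v (st_quad al be c e)
    (\sum_(i < n) (2 * al i * a.1 ord0 i * v.1 ord0 i + be i * v.1 ord0 i)
     + e * v.2).
Proof.
apply: (is_derive_quadratic _ (q := \sum_(i < n) al i * v.1 ord0 i ^+ 2)) => h.
rewrite /st_quad /= [h *: v.2]/GRing.scale /=.
have -> : \sum_(i < n) (al i * (h *: v.1 + a.1) ord0 i ^+ 2
                         + be i * (h *: v.1 + a.1) ord0 i)
  = \sum_(i < n) (al i * a.1 ord0 i ^+ 2 + be i * a.1 ord0 i)
    + h * \sum_(i < n) (2 * al i * a.1 ord0 i * v.1 ord0 i + be i * v.1 ord0 i)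
    + h ^+ 2 * \sum_(i < n) al i * v.1 ord0 i ^+ 2.
  rewrite !mulr_sumr -!big_split /=; apply: eq_bigr => i _; rewrite !mxE.
  (* matrix entries have the unreduced type [(fun=> R) _], which [ring] rejects *)
  move: (v.1 ord0 i) (a.1 ord0 i) => x y.
  by change (R : Type) in x, y; ring.
ring.
Qed.

Lemma is_derive_st_poly al be c e d m a v :
  is_derive a v (st_poly al be c e d m)
    (st_poly (fun=> 0) (fun i => 2 * al i * v.1 ord0 i)
       (\sum_(i < n) be i * v.1 ord0 i + e * v.2) 0 (d * m%:R * v.2) m.-1 a).
Proof.
have time_derive : is_derive a v (fun z : ST R n => z.2 : R^o) v.2.
  by apply: (is_derive_quadratic _ (q := 0)) => h; rewrite mulr0 addr0 addrC.
have := is_deriveD (is_derive_st_quad al be c e a v)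
  (is_deriveZ d (is_deriveX m time_derive)).
have -> : st_quad al be c e + d *: (fun z : ST R n => z.2 : R^o) ^+ m
          = st_poly al be c e d m.
  by apply/funext => z; rewrite /st_poly /= exprfctE.
move/is_derive_eq; apply.
rewrite /st_poly /st_quad /= big_split /= [d *: _]/GRing.scale /=.
under [X in _ = _ + X + _ + _]eq_bigr do rewrite mul0r add0r.
rewrite [_ *: v.2]/GRing.scale /=.
have -> : \sum_(i < n) 2 * al i * v.1 ord0 i * a.1 ord0 i
        = \sum_(i < n) 2 * al i * a.1 ord0 i * v.1 ord0 i.
  by apply: eq_bigr => i _; ring.
ring.
Qed.

Lemma derive_st_poly_at al be c e d m a v :
  'D_v (st_poly al be c e d m) a =
    st_poly (fun=> 0) (fun i => 2 * al i * v.1 ord0 i)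
      (\sum_(i < n) be i * v.1 ord0 i + e * v.2) 0 (d * m%:R * v.2) m.-1 a.
Proof. exact: (@derive_val _ _ _ _ _ _ _ (is_derive_st_poly _ _ _ _ _ _ a v)). Qed.

Lemma derive_st_poly al be c e d m v :
  'D_v (st_poly al be c e d m) =
    st_poly (fun=> 0) (fun i => 2 * al i * v.1 ord0 i)
      (\sum_(i < n) be i * v.1 ord0 i + e * v.2) 0 (d * m%:R * v.2) m.-1.
Proof. by apply/funext => a; rewrite derive_st_poly_at. Qed.

Lemma derivable_st_poly al be c e d m a v : derivable (st_poly al be c e d m) a v.
Proof. exact: (@ex_derive _ _ _ _ _ _ _ (is_derive_st_poly _ _ _ _ _ _ a v)). Qed.

Lemma continuous_st_poly al be c e d m : continuous (st_poly al be c e d m).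
Proof.
have time_cont : continuous (fun z : ST R n => z.2 : R^o) by move=> z; exact: cvg_snd.
have coord_cont i : continuous (fun z : ST R n => z.1 ord0 i : R^o).
  move=> z; apply: (continuous_comp (f := fst) (g := fun M : 'rV[R]_n => M ord0 i : R^o)).
    exact: cvg_fst.
  exact: coord_continuous.
move=> z; rewrite /st_poly /st_quad.
apply: cvgD; last first.
  apply: cvgM; first exact: cvg_cst.
  exact: (continuous_comp (time_cont z) (@exprn_continuous R m _)).
apply: cvgD; last by apply: cvgM; [exact: cvg_cst | exact: time_cont].
apply: cvgD; first exact: cvg_cst.
have add_cont : continuous (fun x : R^o * R^o => x.1 + x.2) by exact: add_continuous.
apply: (cvg_big add_cont) => // i _.
apply: cvgD; apply: cvgM; try exact: cvg_cst.
  exact: (continuous_comp (coord_cont i z) (@exprn_continuous R 2 _)).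
exact: coord_cont.
Qed.

Lemma C2_st_poly al be c e d m : C2 (st_poly al be c e d m).
Proof.
split; first exact: continuous_st_poly.
split; first exact: derivable_st_poly.
split; first by move=> v; rewrite derive_st_poly; exact: continuous_st_poly.
split; first by move=> z v w; rewrite derive_st_poly; exact: derivable_st_poly.
by move=> v w; rewrite !derive_st_poly; exact: continuous_st_poly.
Qed.

Lemma sum_delta_row (f : 'I_n -> R) i :
  \sum_(j < n) f j * (delta_mx 0 i : 'rV[R]_n) ord0 j = f i.
Proof.
rewrite (bigD1 i) //= mxE !eqxx mulr1 big1 ?addr0 // => j ji.
by rewrite mxE (negbTE ji) andbF mulr0.
Qed.

Lemma derive_sdir_st_poly al be c e d m i z :
  'D_(sdir i) (st_poly al be c e d m) z = 2 * al i * z.1 ord0 i + be i.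
Proof.
rewrite derive_st_poly_at /st_poly /st_quad /=.
under [X in _ + X + _ + _]eq_bigr do rewrite mul0r add0r mulrAC.
by rewrite !sum_delta_row; ring.
Qed.

Lemma derive_tdir_st_poly al be c e d m z :
  'D_(tdir R n) (st_poly al be c e d m) z = e + d * m%:R * z.2 ^+ m.-1.
Proof.
rewrite derive_st_poly_at /st_poly /st_quad /=.
rewrite !big1 => [|i _|i _]; rewrite ?mxE ?(mulr0, mul0r, addr0) //.
ring.
Qed.

End SpaceTimePolynomials.

Section EuclideanBall.
Variables (R : realType) (n : nat).
Implicit Types (x y : 'rV[R]_n).

Lemma enorm_ge0 x : 0 <= enorm x.
Proof. exact: sqrtr_ge0. Qed.

Lemma enorm_sqr x : enorm x ^+ 2 = \sum_(k < n) x ord0 k ^+ 2.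
Proof. by rewrite sqr_sqrtr // sumr_ge0 // => k _; exact: sqr_ge0. Qed.

Lemma enorm0 : enorm (0 : 'rV[R]_n) = 0.
Proof. by rewrite /enorm big1 ?sqrtr0 // => k _; rewrite mxE expr0n. Qed.

Lemma enorm_eq0 x : (enorm x == 0) = (x == 0).
Proof.
apply/idP/idP => [|/eqP ->]; last by rewrite enorm0.
rewrite -sqrf_eq0 enorm_sqr psumr_eq0 => [/allP x0|k _]; last exact: sqr_ge0.
apply/eqP/rowP => k; rewrite mxE; apply/eqP; rewrite -sqrf_eq0.
exact: x0 k (mem_index_enum _).
Qed.

Lemma enorm_le1 x : (enorm x <= 1) = (\sum_(k < n) x ord0 k ^+ 2 <= 1).
Proof. by rewrite /enorm -{1}sqrtr1 ler_sqrt. Qed.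

Lemma coord_le_enorm x k : `|x ord0 k| <= enorm x.
Proof.
rewrite -sqrtr_sqr ler_sqrt ?sumr_ge0 // => [|j _]; last exact: sqr_ge0.
by rewrite (bigD1 k) //= lerDl sumr_ge0 // => j _; exact: sqr_ge0.
Qed.

Lemma enorm_lt1_nbhs x : enorm x < 1 ->
  exists2 r : R, 0 < r & forall y, enorm (y - x) < r -> enorm y <= 1.
Proof.
set s := \sum_(k < n) x ord0 k ^+ 2 => x_lt1.
have s_lt1 : s < 1 by move: x_lt1; rewrite /enorm -[X in _ < X]sqrtr1 ltr_sqrt.
have n3_gt0 : 0 < 3 * n.+1%:R :> R by [].
exists (Num.min 1 ((1 - s) / (3 * n.+1%:R))).
  by rewrite lt_min ltr01 divr_gt0 // subr_gt0.
move=> y; set r := Num.min _ _ => yx_lt_r.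
have r_le1 : r <= 1 by rewrite ge_min lexx.
have r_small : r * (3 * n.+1%:R) <= 1 - s by rewrite -ler_pdivlMr // ge_min lexx orbT.
have r_ge0 : 0 <= r := le_trans (enorm_ge0 _) (ltW yx_lt_r).
have coord_sqr k : y ord0 k ^+ 2 <= x ord0 k ^+ 2 + 3 * r.
  have := le_lt_trans (coord_le_enorm (y - x) k) yx_lt_r.
  have := le_trans (coord_le_enorm x k) (ltW x_lt1).
  rewrite !mxE ltr_norml ler_norml => /andP[xk1 xk2] /andP[d1 d2].
  have -> : y ord0 k = x ord0 k + (y ord0 k - x ord0 k) by ring.
  move: (x ord0 k) (y ord0 k - x ord0 k) xk1 xk2 d1 d2 => a b *; nra.
rewrite enorm_le1; apply: le_trans (ler_sum _ (fun k _ => coord_sqr k)) _.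
rewrite big_split /= -/s sumr_const card_ord -mulr_natr.
have : (n%:R : R) <= n.+1%:R by rewrite ler_nat.
nra.
Qed.

Lemma compact_unit_ball : compact [set x : 'rV[R]_n | enorm x <= 1].
Proof.
apply: bounded_closed_compact.
  exists 1; split => // M M_gt1 x /= x_le1.
  rewrite [leLHS]/Num.norm /= mx_normrE.
  apply: bigmax_le => [|[i j] _ /=]; first exact: le_trans (ltW M_gt1).
  rewrite (ord1 i); apply: le_trans (ltW M_gt1).
  exact: le_trans (coord_le_enorm x j) x_le1.
have -> : [set x : 'rV[R]_n | enorm x <= 1] =
    (fun x : 'rV[R]_n => \sum_(k < n) x ord0 k ^+ 2) @^-1` [set r : R | r <= 1].
  by apply/seteqP; split => x /=; rewrite enorm_le1.
apply: preimage_closed; last exact: closed_le.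
have add_cont : continuous (fun x : R * R => x.1 + x.2) by exact: add_continuous.
move=> x _; apply: (cvg_big (F := nbhs x) add_cont) => k _.
by apply: cvgM; exact: coord_continuous.
Qed.

Lemma compact_cyl (T : R) : compact (@cyl R n T).
Proof.
have -> : @cyl R n T = [set x : 'rV[R]_n | enorm x <= 1] `*` [set s : R^o | 0 <= s <= T].
  by apply/seteqP; split => z.
apply: compact_setX; first exact: compact_unit_ball.
have -> : [set s : R^o | 0 <= s <= T] = `[0, T]%classic.
  by apply/seteqP; split => s; rewrite /= in_itv.
exact: segment_compact.
Qed.

Lemma cyl_max_local_max (f : ST R n -> R) (T : R) (z : ST R n) :
  enorm z.1 < 1 -> 0 < z.2 < T -> (forall y : ST R n, @cyl R n T y -> f y <= f z) ->
  local_max_at f z.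
Proof.
move=> z1_lt1 /andP[z2_gt0 z2_ltT] f_max.
have [r r_gt0 ball_r] := enorm_lt1_nbhs z1_lt1.
exists (Num.min r (Num.min z.2 (T - z.2))); split.
  by rewrite !lt_min r_gt0 z2_gt0 subr_gt0 z2_ltT.
move=> y; rewrite !lt_min => /andP[y1_near _] /andP[_ /andP[y2_near1 y2_near2]].
apply: f_max; split; first exact: ball_r.
move: y2_near1 y2_near2; rewrite !ltr_norml => /andP[? ?] /andP[? ?].
by apply/andP; split; lra.
Qed.

End EuclideanBall.

Section Barrier.
Variables (R : realType) (n : nat).
Implicit Types (a e d p : R) (m : nat) (z : ST R n).

Definition barrier a e d m : ST R n -> R^o := st_poly (fun=> a) (fun=> 0) 0 e d m.

Lemma barrierE a e d m z :
  barrier a e d m z = a * enorm z.1 ^+ 2 + e * z.2 + d * z.2 ^+ m.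
Proof.
rewrite /barrier /st_poly /st_quad enorm_sqr add0r mulr_sumr.
by under eq_bigr do rewrite mul0r addr0.
Qed.

Lemma hess_barrier a e d m z : hess (barrier a e d m) z = (2 * a)%:M.
Proof.
apply/matrixP => i j; rewrite !mxE /barrier derive_st_poly derive_sdir_st_poly.
by rewrite mulr0 mul0r add0r !mxE eqxx eq_sym mulr_natr.
Qed.

Lemma dt_barrier a e d m z : dt (barrier a e d m) z = e + d * m%:R * z.2 ^+ m.-1.
Proof. exact: derive_tdir_st_poly. Qed.

Lemma lap_barrier a e d m z : lap (barrier a e d m) z = 2 * a * n%:R.
Proof. by rewrite /lap hess_barrier mxtrace_scalar mulr_natr. Qed.

End Barrier.

Lemma eigenvalue_scalar_mx (F : fieldType) (n : nat) (c l : F) :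
  eigenvalue (c%:M : 'M[F]_n) l -> l = c.
Proof.
case/eigenvalueP => v; rewrite mul_mx_scalar => /eqP.
rewrite -subr_eq0 -scalerBl scaler_eq0 subr_eq0 => /orP[/eqP -> //|/eqP ->].
by rewrite eqxx.
Qed.

Lemma eigenvalue_scalar_mx_self (F : fieldType) (n : nat) (c : F) :
  (0 < n)%N -> eigenvalue (c%:M : 'M[F]_n) c.
Proof.
move=> n_gt0; apply/eigenvalueP; exists (const_mx 1); first by rewrite mul_mx_scalar.
by apply/eqP => /rowP /(_ (Ordinal n_gt0)); rewrite !mxE; apply/eqP; rewrite oner_eq0.
Qed.

Lemma is_lambda_scalar_mx (R : realType) (n : nat) (c : R) : (0 < n)%N ->
  is_lambda_max (c%:M : 'M[R]_n) c /\ is_lambda_min (c%:M : 'M[R]_n) c.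
Proof.
move=> n_gt0; have c_eig := eigenvalue_scalar_mx_self c n_gt0.
by split; split => // l /eigenvalue_scalar_mx ->.
Qed.

Section BarrierTest.
Variables (R : realType) (n : nat) (p M0 a e d : R) (m : nat).
Variables (u : ST R n -> R) (D : set (ST R n)) (z0 : ST R n).
Hypothesis n_gt0 : (0 < n)%N.
Let phi := @barrier R n a e d m.

(* The value of [L phi - phi_t] at [z0] for [phi := barrier a e d m]; the
   Hessian is scalar, so both branches of the viscosity test agree. *)
Definition barrier_op : R :=
  p^-1 * (2 * a * n%:R + (p - 2) * (2 * a)) - (e + d * m%:R * z0.2 ^+ m.-1).

Lemma npLap_barrier : grad phi z0 != 0 ->
  npLap p phi z0 = p^-1 * (2 * a * n%:R + (p - 2) * (2 * a)).
Proof.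
move=> g_neq0; rewrite /npLap lap_barrier hess_barrier.
set g := grad _ z0.
have -> : (g *m (2 * a)%:M *m g^T) 0 0 = 2 * a * enorm g ^+ 2.
  rewrite mul_mx_scalar -scalemxAl mxE enorm_sqr mxE !mulr_sumr.
  by apply: eq_bigr => k _; rewrite [g^T _ _]mxE expr2.
by rewrite mulfK ?sqrf_eq0 ?enorm_eq0 //; ring.
Qed.

Lemma visc_sub_barrier : visc_sub p M0 u D -> D z0 ->
  local_max_at (fun z => u z - phi z) z0 -> - M0 <= barrier_op.
Proof.
move=> u_sub Dz0 max_z0.
have [nondeg deg] := u_sub z0 _ Dz0 (C2_st_poly _ _ _ _ _ _) max_z0.
have [lmax lmin] := is_lambda_scalar_mx (2 * a) n_gt0.
case: (eqVneq (grad phi z0) 0) => [g0|g_neq0].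
  have := deg g0 (2 * a); rewrite hess_barrier lap_barrier dt_barrier.
  by case: ifP => _ => [/(_ lmax) | /(_ lmin)].
by have := nondeg g_neq0; rewrite npLap_barrier // dt_barrier.
Qed.

Lemma visc_super_barrier : visc_super p M0 u D -> D z0 ->
  local_min_at (fun z => u z - phi z) z0 -> barrier_op <= M0.
Proof.
move=> u_super Dz0 min_z0.
have [nondeg deg] := u_super z0 _ Dz0 (C2_st_poly _ _ _ _ _ _) min_z0.
have [lmax lmin] := is_lambda_scalar_mx (2 * a) n_gt0.
case: (eqVneq (grad phi z0) 0) => [g0|g_neq0].
  have := deg g0 (2 * a); rewrite hess_barrier lap_barrier dt_barrier.
  by case: ifP => _ => [/(_ lmin) | /(_ lmax)].
by have := nondeg g_neq0; rewrite npLap_barrier // dt_barrier.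
Qed.

End BarrierTest.

Lemma barrier_opN (R : realType) (n : nat) (p a e d : R) (m : nat) (z : ST R n) :
  barrier_op p (- a) (- e) (- d) m z = - barrier_op p a e d m z.
Proof. rewrite /barrier_op; ring. Qed.

Lemma lin_sub_sqr_le (R : realType) (L r : R) : 0 <= L -> L * r - 2 * L * r ^+ 2 <= L / 8.
Proof.
move=> L_ge0; have : 0 <= L * (4 * r - 1) ^+ 2 by rewrite mulr_ge0 ?sqr_ge0.
have : (8 : R)^-1 * 8 = 1 by rewrite mulVf.
nra.
Qed.

Section BarrierMaximum.
Variables (R : realType) (n : nat) (T t1 L K d : R) (m : nat).
Variables (w : ST R n -> R) (good : ST R n -> Prop).
Hypotheses (L_gt0 : 0 < L) (K_ge0 : 0 <= K) (d_ge0 : 0 <= d) (m_gt0 : (0 < m)%N).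
Hypotheses (t1_gt0 : 0 < t1) (t1_le_T : t1 <= T).
Hypothesis w_cont : {within @cyl R n T, continuous w}.
Hypothesis w_lip : forall x y t, enorm x <= 1 -> enorm y <= 1 -> 0 <= t <= T ->
  `|w (x, t) - w (y, t)| <= L * enorm (x - y).
Let phi := @barrier R n (2 * L) K d m.
Hypothesis no_good_max : forall z, @cyl_int R n T z -> good z ->
  ~ local_max_at (fun y => w y - phi y) z.
Hypothesis w_top : forall x, enorm x <= 1 -> w (x, t1) < w (0, 0) + d * t1 ^+ m.

Lemma barrier_argmax : exists z : ST R n,
  [/\ enorm z.1 <= 1, 0 <= z.2 < t1, z.2 = 0 \/ ~ good z &
      forall y, @cyl R n t1 y -> w y - phi y <= w z - phi z].
Proof.
set f := fun z => w z - phi z.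
have cyl_t1_sub : @cyl R n t1 `<=` @cyl R n T.
  by move=> [x s] [x_le1 /andP[s_ge0 s_le]]; split; rewrite //= s_ge0 (le_trans s_le).
have f_cont : {within @cyl R n t1, continuous f}.
  move=> z; apply: cvgB; first exact: continuous_subspaceW cyl_t1_sub w_cont z.
  have phi_cont : continuous phi by exact: continuous_st_poly.
  by apply: continuous_subspaceT.
have cyl00 : @cyl R n t1 (0, 0) by split; rewrite /= ?enorm0 ?lexx ?ltW.
have [[x t] xt_in f_max] :=
  compact_EVT_max (ex_intro _ _ cyl00) (@compact_cyl R n t1) f_cont.
move: xt_in; rewrite inE => -[/= x_le1 /andP[t_ge0 t_le]].
have {}f_max y : @cyl R n t1 y -> f y <= f (x, t) by move=> y_cyl; apply: f_max; rewrite inE.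
have phiE y : phi y = 2 * L * enorm y.1 ^+ 2 + K * y.2 + d * y.2 ^+ m := barrierE _ _ _ _ _.
have phi00 : phi (0, 0) = 0.
  by rewrite phiE enorm0 /= !expr0n (gtn_eqF m_gt0) !(mulr0, mul0r, addr0).
have t_lt : t < t1.
  rewrite lt_neqAle t_le andbT; apply: contraTneq (f_max _ cyl00) => ->.
  rewrite -ltNge /f phi00 subr0 phiE /=.
  have := mulr_ge0 (mulr_ge0 (ler0n _ 2) (ltW L_gt0)) (sqr_ge0 (enorm x)).
  have := mulr_ge0 K_ge0 (ltW t1_gt0).
  have := w_top x_le1; lra.
have x_lt1 : enorm x < 1.
  rewrite lt_neqAle x_le1 andbT; apply/eqP => x1.
  have cyl0t : @cyl R n t1 (0, t) by split; rewrite /= ?enorm0 ?t_ge0.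
  have := @w_lip x 0 t x_le1; rewrite enorm0 ler01 t_ge0 (le_trans t_le) //.
  rewrite subr0 x1 mulr1 => /(_ isT isT); rewrite ler_norml => /andP[_ lip].
  have := f_max _ cyl0t; rewrite /f !phiE /= x1 enorm0 expr1n expr0n /= mulr1 mulr0.
  (* [lra] ignores section hypotheses, so [L_gt0] is pushed to the goal *)
  have := L_gt0; lra.
exists (x, t); split; rewrite /= ?t_ge0 //.
have [good_xt|] := pselect (good (x, t)); last by right.
left; apply/eqP; apply: contraT => t_neq0.
have t_gt0 : 0 < t by rewrite lt_neqAle eq_sym t_neq0 t_ge0.
have xt_int : @cyl_int R n T (x, t) by split; rewrite //= t_gt0 (lt_le_trans t_lt).
case: (no_good_max xt_int good_xt).
by apply: (cyl_max_local_max (z := (x, t)) x_lt1 _ f_max); rewrite t_gt0 t_lt.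
Qed.

Lemma barrier_bound s : 0 <= s < t1 ->
  w (0, s) <= w (0, 0) + L / 8 + K * s + d * s ^+ m \/
  exists z : ST R n, [/\ enorm z.1 <= 1, 0 <= z.2 < t1, ~ good z &
                         w (0, s) <= w z + K * s + d * s ^+ m].
Proof.
case/andP => s_ge0 s_lt.
have cyl0s : @cyl R n t1 (0, s) by split; rewrite /= ?enorm0 ?s_ge0 ?ltW.
have [[x t] [/= x_le1 /andP[t_ge0 t_lt] [t0|not_good] xt_max]] := barrier_argmax.
  left; move: xt_max => /(_ _ cyl0s); rewrite /phi !barrierE /= t0 enorm0.
  rewrite expr0n [0 ^+ m]expr0n (gtn_eqF m_gt0) /= !mulr0 !addr0.
  have := @w_lip x 0 0 x_le1; rewrite enorm0 ler01 lexx subr0 (le_trans (ltW t1_gt0)) //.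
  move=> /(_ isT isT); rewrite ler_norml => /andP[_ lip].
  have := lin_sub_sqr_le (enorm x) (ltW L_gt0).
  lra.
right; exists (x, t); split => //=; first by rewrite t_ge0.
move: xt_max => /(_ _ cyl0s); rewrite /phi !barrierE /= enorm0.
have := mulr_ge0 (mulr_ge0 (ler0n _ 2) (ltW L_gt0)) (sqr_ge0 (enorm x)).
have := mulr_ge0 K_ge0 t_ge0; have := mulr_ge0 d_ge0 (exprn_ge0 m t_ge0).
lra.
Qed.

End BarrierMaximum.

Lemma steep_monomial (R : realType) (Q t1 s : R) : 0 < Q -> 0 <= s < t1 ->
  exists m : nat, exists2 d : R,
    0 <= d & [/\ (0 < m)%N, d * t1 ^+ m = Q & d * s ^+ m <= 1].
Proof.
move=> Q_gt0 /andP[s_ge0 s_lt]; have t1_gt0 := le_lt_trans s_ge0 s_lt.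
have ratio_ge0 : 0 <= s / t1 by rewrite divr_ge0 // ltW.
have ratio_lt1 : `|s / t1| < 1 by rewrite ger0_norm // ltr_pdivrMr // mul1r.
have /cvgrPdist_lt /(_ Q^-1) [|N _ ratio_small] := cvg_expr ratio_lt1.
  by rewrite invr_gt0.
have := ratio_small N.+1 (leqnSn N); rewrite sub0r normrN ger0_norm ?exprn_ge0 //.
rewrite expr_div_n => ratio_pow.
have t1m_gt0 : 0 < t1 ^+ N.+1 := exprn_gt0 _ t1_gt0.
exists N.+1, (Q / t1 ^+ N.+1); first by rewrite divr_ge0 ?ltW.
split => //; first by rewrite mulfVK ?gt_eqF.
rewrite mulrAC -mulrA -ler_pdivlMl // mulr1.
exact: ltW.
Qed.

Lemma barrier_op_lt (R : realType) (n : nat) (p M0 L d : R) (m : nat) (z : ST R n) :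
  (0 < n)%N -> 1 < p -> 0 < L -> 0 <= d -> 0 <= z.2 ->
  barrier_op p (2 * L) (4 * L * n%:R + M0) d m z < - M0.
Proof.
move=> n_gt0 p_gt1 L_gt0 d_ge0 z2_ge0; rewrite /barrier_op.
have n_ge1 : 1 <= n%:R :> R by rewrite ler1n.
have p_gt0 : 0 < p by lra.
have : 0 <= d * m%:R * z.2 ^+ m.-1 by rewrite !mulr_ge0 ?exprn_ge0.
suff : p^-1 * (2 * (2 * L) * n%:R + (p - 2) * (2 * (2 * L))) < 4 * L * n%:R by lra.
rewrite -(ltr_pM2l p_gt0) mulVKf ?gt_eqF //.
have : 0 <= (n%:R - 1) * (p - 1) by apply: mulr_ge0; lra.
move/(mulr_ge0 (ltW L_gt0)); lra.
Qed.

Lemma barrier_speed_le (R : realType) (n : nat) (M0 L s : R) :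
  0 < M0 -> 0 < L -> 0 <= s <= (4 * n%:R + M0)^-1 ->
  (4 * L * n%:R + M0) * s <= L + 1.
Proof.
move=> M0_gt0 L_gt0 /andP[s_ge0 s_le].
have n_ge0 : 0 <= n%:R :> R by [].
have D_gt0 : 0 < 4 * n%:R + M0 by lra.
have K_ge0 : 0 <= 4 * L * n%:R + M0 by nra.
apply: le_trans (ler_wpM2l K_ge0 s_le) _.
rewrite ler_pdivrMr //; nra.
Qed.

Section Oscillation.
Variables (R : realType) (n : nat) (p M0 L : R) (u : ST R n -> R).
Hypotheses (n_gt0 : (0 < n)%N) (p_gt1 : 1 < p) (M0_gt0 : 0 < M0) (L_gt0 : 0 < L).
Let T := (4 * n%:R + M0)^-1.
Let K := 4 * L * n%:R + M0.
Hypothesis u_cont : {within @cyl R n T, continuous u}.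
Hypothesis u_ge0 : forall z, @cyl R n T z -> 0 <= u z.
Hypothesis u_lip : forall (x y : 'rV[R]_n) (t : R), enorm x <= 1 -> enorm y <= 1 ->
  0 <= t <= T -> `|u (x, t) - u (y, t)| <= L * enorm (x - y).
Let D := [set z | @cyl_int R n T z /\ 1 < u z].

Let K_ge0 : 0 <= K.
Proof. by rewrite /K addr_ge0 ?mulr_ge0 ?(ltW L_gt0) ?(ltW M0_gt0). Qed.

Let T_gt0 : 0 < T.
Proof. by rewrite /T invr_gt0 (ltr_wpDl (mulr_ge0 _ _) M0_gt0). Qed.

Let cyl00 : @cyl R n T (0, 0).
Proof. by split; rewrite /= ?enorm0 ?lexx ?(ltW T_gt0). Qed.

Lemma u_upper_before (u_sub : visc_sub p M0 u D) t1 s :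
  0 < t1 <= T -> 0 <= s < t1 -> u (0, s) <= u (0, 0) + 2 * L + 3.
Proof.
move=> /andP[t1_gt0 t1_le] s_bounds.
have [zM _ u_max] := compact_EVT_max (ex_intro _ _ cyl00) (@compact_cyl R n T) u_cont.
have {}u_max y : @cyl R n T y -> u y <= u zM by move=> y_cyl; apply: u_max; rewrite inE.
have u00_ge0 := u_ge0 cyl00.
have [m [d d_ge0 [m_gt0 d_t1 d_s]]] :=
  steep_monomial (Q := u zM + 1) (ltr_wpDl (le_trans u00_ge0 (u_max _ cyl00)) ltr01) s_bounds.
have no_max z : @cyl_int R n T z -> 1 < u z ->
    ~ local_max_at (fun y => u y - @barrier R n (2 * L) K d m y) z.
  move=> z_int z_good /(visc_sub_barrier n_gt0 u_sub (conj z_int z_good)).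
  have := barrier_op_lt M0 m n_gt0 p_gt1 L_gt0 d_ge0 (ltW (andP z_int.2).1).
  rewrite -/K; lra.
have top x : enorm x <= 1 -> u (x, t1) < u (0, 0) + d * t1 ^+ m.
  move=> x_le1; have : @cyl R n T (x, t1) by split; rewrite //= ltW.
  by move/u_max; rewrite d_t1; lra.
have Ks : K * s <= L + 1.
  by apply: barrier_speed_le => //; case/andP: s_bounds => -> /ltW/le_trans ->.
have := L_gt0.
case: (barrier_bound L_gt0 K_ge0 d_ge0 m_gt0 t1_gt0 t1_le u_cont u_lip no_max top s_bounds)
  => [|[z [_ _ /negP]]]; first lra.
by rewrite -leNgt; lra.
Qed.

Lemma u_lower_before (u_super : visc_super p M0 u D) t1 s :
  0 < t1 <= T -> 0 <= s < t1 ->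
  (forall x r, enorm x <= 1 -> 0 <= r < t1 -> 1 < u (x, r)) ->
  u (0, 0) - (2 * L + 3) <= u (0, s).
Proof.
move=> /andP[t1_gt0 t1_le] s_bounds u_big.
have u00_ge0 := u_ge0 cyl00.
have [m [d d_ge0 [m_gt0 d_t1 d_s]]] :=
  steep_monomial (Q := u (0, 0) + 1) (ltr_wpDl u00_ge0 ltr01) s_bounds.
pose w z := - u z.
have w_cont : {within @cyl R n T, continuous w} by move=> z; apply: cvgN; exact: u_cont.
have w_lip x y t : enorm x <= 1 -> enorm y <= 1 -> 0 <= t <= T ->
    `|w (x, t) - w (y, t)| <= L * enorm (x - y).
  by rewrite /w opprK addrC distrC; exact: u_lip.
have no_max z : @cyl_int R n T z -> 1 < u z ->
    ~ local_max_at (fun y => w y - @barrier R n (2 * L) K d m y) z.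
  move=> z_int z_good [r [r_gt0 r_max]].
  have z_min : local_min_at (fun y => u y - @barrier R n (- (2 * L)) (- K) (- d) m y) z.
    by exists r; split => // y y1 y2; have := r_max y y1 y2; rewrite /w !barrierE; lra.
  have := visc_super_barrier n_gt0 u_super (conj z_int z_good) z_min.
  have := barrier_op_lt M0 m n_gt0 p_gt1 L_gt0 d_ge0 (ltW (andP z_int.2).1).
  rewrite barrier_opN -/K; lra.
have top x : enorm x <= 1 -> w (x, t1) < w (0, 0) + d * t1 ^+ m.
  move=> x_le1; have : @cyl R n T (x, t1) by split; rewrite //= ltW.
  by move/u_ge0; rewrite /w d_t1; lra.
have Ks : K * s <= L + 1.
  by apply: barrier_speed_le => //; case/andP: s_bounds => -> /ltW/le_trans ->.
have := L_gt0.
case: (barrier_bound L_gt0 K_ge0 d_ge0 m_gt0 t1_gt0 t1_le w_cont w_lip no_max top s_bounds)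
  => [|[[x r] [/= x_le1 r_bounds []]]]; first by rewrite /w; lra.
exact: u_big.
Qed.

Lemma u_time_cont t0 e : 0 <= t0 <= T -> 0 < e ->
  exists2 del : R, 0 < del & forall s, 0 <= s <= T -> `|s - t0| < del ->
    `|u (0, s) - u (0, t0)| < e.
Proof.
move=> t0_bounds e_gt0.
have cyl0t0 : @cyl R n T (0, t0) by split; rewrite /= ?enorm0.
have /cvgrPdist_lt /(_ e e_gt0) := (subspace_continuousP _ _).1 u_cont _ cyl0t0.
rewrite near_withinE => /nbhs_ballP[del del_gt0 near_t0].
exists del => // s s_bounds s_near.
have cyl0s : @cyl R n T (0, s) by split; rewrite /= ?enorm0.
rewrite distrC; apply: near_t0 cyl0s; split; first exact: ballxx.
by rewrite /ball /= distrC.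
Qed.

Lemma u_time_approx t : 0 < t <= T ->
  exists s, 0 <= s < t /\ `|u (0, s) - u (0, t)| < 1.
Proof.
move=> /andP[t_gt0 t_le].
have t_bounds : 0 <= t <= T by rewrite ltW.
have [del del_gt0 near_t] := u_time_cont t_bounds ltr01.
set r := Num.min t del.
have r_gt0 : 0 < r by rewrite lt_min t_gt0 del_gt0.
have r_le_t : r <= t by rewrite ge_min lexx.
have r_le_del : r <= del by rewrite ge_min lexx orbT.
exists (t - r / 2); split; first by apply/andP; split; lra.
apply: near_t; first by apply/andP; split; lra.
have -> : t - r / 2 - t = - (r / 2) by ring.
rewrite normrN ger0_norm; lra.
Qed.

Lemma u_upper (u_sub : visc_sub p M0 u D) t :
  0 <= t <= T -> u (0, t) <= u (0, 0) + 2 * L + 4.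
Proof.
case/andP => t_ge0 t_le; have := L_gt0.
have [->|t_neq0] := eqVneq t 0; first lra.
have t_bounds : 0 < t <= T by rewrite lt_neqAle eq_sym t_neq0 t_ge0.
have [s [s_bounds /ltr_distlCDr s_close]] := u_time_approx t_bounds.
have := u_upper_before u_sub t_bounds s_bounds; lra.
Qed.

Lemma u_first_drop beta t : 0 <= t <= T -> u (0, t) <= beta -> beta + 1 <= u (0, 0) ->
  exists t1, [/\ 0 < t1 <= T, u (0, t1) < beta + 1 &
                 forall r, 0 <= r < t1 -> beta < u (0, r)].
Proof.
move=> t_bounds ut_le u00_ge.
set Z := [set s : R | 0 <= s <= T /\ u (0, s) <= beta].
have Zt : Z t by [].
have Z_lb : has_lbound Z by exists 0 => s [/andP[]].
have Z_inf : has_inf Z by split; [exists t | exact: Z_lb].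
set t1 := inf Z.
have t1_ge0 : 0 <= t1 by apply: lb_le_inf; [exists t | move=> s [/andP[]]].
have t1_le : t1 <= T := le_trans (ge_inf Z_lb Zt) (andP t_bounds).2.
have ut1 : u (0, t1) < beta + 1.
  have [del del_gt0 near_t1] := u_time_cont (t0 := t1) (introT andP (conj t1_ge0 t1_le)) ltr01.
  have [s [/andP[s_ge0 s_le] us] s_near] := inf_adherent del_gt0 Z_inf.
  have t1_le_s : t1 <= s := ge_inf Z_lb (conj (introT andP (conj s_ge0 s_le)) us).
  have := near_t1 s (introT andP (conj s_ge0 s_le)).
  rewrite ger0_norm ?subr_ge0 // ltrBlDl => /(_ s_near) /ltr_distlCDr; lra.
exists t1; split => //.
  by rewrite t1_le andbT lt_neqAle t1_ge0 andbT; apply: contraTneq ut1 => <-; rewrite -leNgt.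
move=> r /andP[r_ge0 r_lt]; rewrite ltNge; apply/negP => ur_le.
have : t1 <= r by apply: (ge_inf Z_lb); split; rewrite // r_ge0 (le_trans (ltW r_lt)).
by rewrite leNgt r_lt.
Qed.

Lemma u_lower (u_super : visc_super p M0 u D) t :
  0 <= t <= T -> u (0, 0) - (3 * L + 6) <= u (0, t).
Proof.
move=> t_bounds; have := L_gt0.
have ut_ge0 : 0 <= u (0, t) by apply: u_ge0; split; rewrite /= ?enorm0.
have [|u00_big] := lerP (u (0, 0)) (3 * L + 6); first lra.
have [ut_le|] := lerP (u (0, t)) (u (0, 0) - (2 * L + 5)); last lra.
move=> L_pos; have drop : u (0, 0) - (2 * L + 5) + 1 <= u (0, 0) by lra.
have [t1 [t1_bounds ut1 u_above]] := u_first_drop t_bounds ut_le drop.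
have u_big x r : enorm x <= 1 -> 0 <= r < t1 -> 1 < u (x, r).
  move=> x_le1 r_bounds; have := u_above r r_bounds.
  have r_le : 0 <= r <= T.
    by case/andP: r_bounds => -> /ltW/le_trans; apply; case/andP: t1_bounds.
  have := u_lip x_le1 (y := 0) _ r_le; rewrite enorm0 ler01 subr0 => /(_ isT) /ler_distlCBl.
  have := ler_piMr (ltW L_pos) x_le1.
  lra.
have [s [s_bounds /ltr_distlDr s_close]] := u_time_approx t1_bounds.
have := u_lower_before u_super t1_bounds s_bounds u_big; lra.
Qed.

End Oscillation.

Unset Implicit Arguments.

Theorem lemma3p4 (R : realType) (L : R) (hL : 0 < L) :
  exists C : R, forall (n : nat) (p M0 : R) (u : ST R n -> R),
    (1 <= n)%N -> 1 < p -> 0 < M0 ->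
    let T := (4 * n%:R + M0)^-1 in
    {within @cyl R n T, continuous u} ->
    (forall z, @cyl R n T z -> 0 <= u z) ->
    visc_bounded p M0 u [set z | @cyl_int R n T z /\ 1 < u z] ->
    (forall (x y : 'rV[R]_n) (t : R), enorm x <= 1 -> enorm y <= 1 ->
       0 <= t <= T -> `|u (x, t) - u (y, t)| <= L * enorm (x - y)) ->
    forall t : R, 0 <= t <= T -> `|u (0, t) - u (0, 0)| <= C.
Proof.
exists (3 * L + 6).
move=> n p M0 u n_gt0 p_gt1 M0_gt0 T u_cont u_ge0 [u_sub u_super] u_lip t t_bounds.
have := u_upper n_gt0 p_gt1 M0_gt0 hL u_cont u_ge0 u_lip u_sub t_bounds.
have := u_lower n_gt0 p_gt1 M0_gt0 hL u_cont u_ge0 u_lip u_super t_bounds.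
rewrite ler_norml; lra.
Qed.
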